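(* Let $p$ be a prime, $e\ge1$, $q=p^e$, $0\le\ell\le e-1$, and let $m\ge n$. Let $\varphi_1,\dots,\varphi_m\in\mathbb{F}_q^n$ span $\mathbb{F}_q^n$ (i.e. form a frame for $\mathbb{F}_q^n$), and let $\Phi$ be the $n\times m$ matrix whose $j$-th column is $\varphi_j$, viewed as a linear map $\mathbb{F}_q^m\to\mathbb{F}_q^n$. Let $\Phi^{\dagger_\ell}=\sigma_\ell(\Phi)^t$, the $m\times n$ matrix (map $\mathbb{F}_q^n\to\mathbb{F}_q^m$) obtained by raising every entry of $\Phi$ to the power $p^\ell$ and transposing. Then $\operatorname{Ker}(\Phi^{\dagger_\ell}\Phi)=\operatorname{Ker}\Phi$ and $\operatorname{Im}(\Phi^{\dagger_\ell}\Phi)=\operatorname{Im}\Phi^{\dagger_\ell}$.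
   Context: $\sigma_\ell(c)=c^{p^\ell}$ for $c\in\mathbb{F}_q$, applied entrywise to matrices. Equivalently, $\Phi^{\dagger_\ell}\mathbf{y}=\big((\varphi_i,\mathbf{y})_\ell\big)_{i=1}^m$ where $(\mathbf{x},\mathbf{y})_\ell=\sum_{i}x_i^{p^\ell}y_i$. *)

From HB Require Import structures.
From mathcomp Require Import all_boot all_order all_algebra all_field.
Set Implicit Arguments. Unset Strict Implicit. Unset Printing Implicit Defensive.
Import GRing.Theory.
Local Open Scope ring_scope.

Definition sigma_mx (F : finFieldType) (p l : nat) (r c : nat)
  (A : 'M[F]_(r, c)) : 'M[F]_(r, c) :=
  map_mx (fun x => x ^+ (p ^ l)%N) A.

Definition dagger_mx (F : finFieldType) (p l : nat) (r c : nat)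
  (A : 'M[F]_(r, c)) : 'M[F]_(c, r) := (sigma_mx p l A)^T.

Definition mxKer (F : finFieldType) (r c : nat) (A : 'M[F]_(r, c))
  : {set 'cV[F]_c} := [set x : 'cV[F]_c | A *m x == 0].

Definition mxIm (F : finFieldType) (r c : nat) (A : 'M[F]_(r, c))
  : {set 'cV[F]_r} := [set A *m x | x : 'cV[F]_c].

(* the columns phi_1..phi_m of Phi span F^n, i.e. the rows of Phi^T span F^n *)
Definition is_frame (F : finFieldType) (n m : nat) (Phi : 'M[F]_(n, m)) : bool :=
  row_full (Phi^T).

(* The entrywise Frobenius power sigma_l is a field automorphism, so it
   preserves rank: since Phi has rank n, the m x n matrix Phi^{dagger_l} has
   full column rank n and is therefore injective, which gives the kernel
   equality.  Dually Phi has a right inverse, so Phi is onto F^n and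
   Phi^{dagger_l} Phi has the same image as Phi^{dagger_l}. *)

From HB Require Import structures.
From mathcomp Require Import all_boot all_order all_algebra all_field.
Local Open Scope ring_scope.
Import GRing.Theory.

Section Frobenius.

Context {F : finFieldType} {p : nat}.
Hypothesis pcharFp : p \in [pchar F].

Lemma sigma_mx0 r c (A : 'M[F]_(r, c)) : sigma_mx p 0 A = A.
Proof. by apply/matrixP => i j; rewrite !mxE expn0 expr1. Qed.

Lemma sigma_mxS l r c (A : 'M[F]_(r, c)) :
  sigma_mx p l.+1 A = map_mx (pFrobenius_aut pcharFp) (sigma_mx p l A).
Proof. by apply/matrixP => i j; rewrite !mxE expnSr exprM. Qed.

Lemma mxrank_sigma l r c (A : 'M[F]_(r, c)) : \rank (sigma_mx p l A) = \rank A.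
Proof.
elim: l => [|l IHl]; first by rewrite sigma_mx0.
by rewrite sigma_mxS mxrank_map.
Qed.

Lemma row_full_dagger l {n m} {Phi : 'M[F]_(n, m)} :
  is_frame Phi -> row_full (dagger_mx p l Phi).
Proof. by rewrite /is_frame /row_full /dagger_mx !mxrank_tr mxrank_sigma. Qed.

End Frobenius.

Section KernelImage.

Context {F : finFieldType} {k r c : nat}.
Implicit Types (A : 'M[F]_(k, r)) (B : 'M[F]_(r, c)).

Lemma mxKer_mul_row_full A B : row_full A -> mxKer (A *m B) = mxKer B.
Proof.
move=> fullA; apply/setP => x; rewrite !inE -mulmxA.
apply/eqP/eqP => [ABx0 | ->]; last by rewrite mulmx0.
by apply: (row_full_inj fullA); rewrite ABx0 mulmx0.
Qed.

Lemma mxIm_mul_row_free A B : row_free B -> mxIm (A *m B) = mxIm A.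
Proof.
case/row_freeP => C BC1; apply/setP => y.
apply/imsetP/imsetP => [[x _ ->] | [x _ ->]].
  by exists (B *m x); rewrite ?mulmxA.
by exists (C *m x); rewrite // -mulmxA (mulmxA B) BC1 mul1mx.
Qed.

End KernelImage.

Theorem mainTheorem2 (F : finFieldType) (p e l n m : nat)
  (hp : prime p) (hchar : p \in [pchar F]) (he : (1 <= e)%N)
  (hq : #|F| = (p ^ e)%N) (hl : (l <= e - 1)%N) (hmn : (n <= m)%N)
  (Phi : 'M[F]_(n, m)) (hframe : is_frame Phi) :
  mxKer (dagger_mx p l Phi *m Phi) = mxKer Phi /\
  mxIm (dagger_mx p l Phi *m Phi) = mxIm (dagger_mx p l Phi).
Proof.
have freePhi : row_free Phi by rewrite /row_free -mxrank_tr.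
split.
  exact: mxKer_mul_row_full (row_full_dagger hchar l hframe).
exact: mxIm_mul_row_free.
Qed.
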